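(* Let $(\mathcal V,\le,\otimes,\mathbb 1)$ be a non-trivial epistemic calculus which is complete. Then $\mathcal V$ cannot simultaneously be closed, strongly epistemically conservative, and cancellative.
   Context: An epistemic calculus is a symmetric monoidal posetal category $(\mathcal V,\le,\otimes,\mathbb 1)$: a partially ordered set $(\mathcal V,\le)$ together with a binary operation $\otimes$ that is associative, commutative, has unit $\mathbb 1$ (i.e. $\mathbb 1\otimes x = x$ for all $x$), and is monotone ($x\le x'$ and $y\le y'$ imply $x\otimes y\le x'\otimes y'$). It is non-trivial if it has at least two distinct elements. It is complete if every subset $S\subseteq\mathcal V$ has a least upper bound (join) $\bigvee S$. It is closed if there is a binary operation $[-,-]$ on $\mathcal V$ (the internal hom) such that for all $x,y,z$: $x\otimes y\le z \iff x\le [y,z]$. It is strongly epistemically conservative if $x\le x\otimes y$ for all $x,y\in\mathcal V$. It is cancellative if for all $x,y,z$, $x\otimes z\le y\otimes z$ implies $x\le y$. *)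

Record epistemic_calculus (V : Type) (le : V -> V -> Prop)
    (tensor : V -> V -> V) (one : V) : Prop := {
  ec_refl : forall x, le x x;
  ec_trans : forall x y z, le x y -> le y z -> le x z;
  ec_antisym : forall x y, le x y -> le y x -> x = y;
  ec_assoc : forall x y z, tensor x (tensor y z) = tensor (tensor x y) z;
  ec_comm : forall x y, tensor x y = tensor y x;
  ec_unit : forall x, tensor one x = x;
  ec_mono : forall x x' y y', le x x' -> le y y' ->
              le (tensor x y) (tensor x' y')
}.

Definition nontrivial (V : Type) : Prop := exists x y : V, x <> y.

Definition is_join {V : Type} (le : V -> V -> Prop) (S : V -> Prop) (s : V) : Prop :=
  (forall x, S x -> le x s) /\ (forall u, (forall x, S x -> le x u) -> le s u).

Definition complete {V : Type} (le : V -> V -> Prop) : Prop :=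
  forall S : V -> Prop, exists s, is_join le S s.

Definition closed {V : Type} (le : V -> V -> Prop) (tensor : V -> V -> V) : Prop :=
  exists hom : V -> V -> V,
    forall x y z, le (tensor x y) z <-> le x (hom y z).

Definition strongly_epistemically_conservative {V : Type}
    (le : V -> V -> Prop) (tensor : V -> V -> V) : Prop :=
  forall x y, le x (tensor x y).

Definition cancellative {V : Type} (le : V -> V -> Prop) (tensor : V -> V -> V) : Prop :=
  forall x y z, le (tensor x z) (tensor y z) -> le x y.


(* Completeness gives a top element [T], the join of everything.  Strong
   conservativity forces [x ⊗ T = T = 1 ⊗ T] for every [x], and cancelling [T]
   collapses [V] to [{1}]. *)

Arguments ec_refl {V le tensor one}.
Arguments ec_antisym {V le tensor one}.
Arguments ec_comm {V le tensor one}.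

Section ConservativeCancellative.

Context {V : Type} {le : V -> V -> Prop} {tensor : V -> V -> V} {one : V}.
Hypothesis HV : epistemic_calculus V le tensor one.

Lemma is_join_full_top (T : V) : is_join le (fun _ => True) T -> forall x, le x T.
Proof. intros [HT _] x; exact (HT x I). Qed.

Lemma conservative_tensor_top (T : V) :
  strongly_epistemically_conservative le tensor ->
  (forall x, le x T) -> forall x, tensor x T = T.
Proof.
  intros Hcons Htop x.
  apply (ec_antisym HV); [apply Htop |].
  rewrite (ec_comm HV); apply Hcons.
Qed.

Lemma cancellative_tensor_injl (x y z : V) :
  cancellative le tensor -> tensor x z = tensor y z -> x = y.
Proof.
  intros Hcanc Hxy.
  apply (ec_antisym HV); apply (Hcanc _ _ z); rewrite Hxy; apply (ec_refl HV).
Qed.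

Lemma conservative_cancellative_top_trivial (T : V) :
  strongly_epistemically_conservative le tensor -> cancellative le tensor ->
  (forall x, le x T) -> forall x, x = one.
Proof.
  intros Hcons Hcanc Htop x.
  apply (cancellative_tensor_injl x one T Hcanc).
  rewrite !(conservative_tensor_top T Hcons Htop); reflexivity.
Qed.

End ConservativeCancellative.

Theorem theorem1 (V : Type) (le : V -> V -> Prop) (tensor : V -> V -> V) (one : V)
  (HV : epistemic_calculus V le tensor one)
  (Hnt : nontrivial V)
  (Hcomp : complete le) :
  ~ (closed le tensor /\ strongly_epistemically_conservative le tensor /\
     cancellative le tensor).
Proof.
  intros [_ [Hcons Hcanc]].
  destruct (Hcomp (fun _ => True)) as [T HT].
  pose proof (conservative_cancellative_top_trivial HV T Hcons Hcanc
                (is_join_full_top T HT)) as Hone.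
  destruct Hnt as [a [b Hab]].
  apply Hab; rewrite (Hone a), (Hone b); reflexivity.
Qed.
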